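(* For every $m\geq1$, the invariant subring $\mathcal{K}(m)^{\mathfrak{S}_3}$ is generated by \[ \{z(i,I)\mid 1\leq i\leq 6,\ I\subset \{1,\dots, m\},\ |I|\leq 3\}. \]
   Context: Let $J=(x+y+w,\ x^2+y^2+w^2,\ x^6+y^6+w^6)\subset\mathbb{Q}[x,y,w]$ with $x,y,w$ of degree 2, and let $\mathcal{K}(m)=\mathbb{Q}[x,y,w]/J\otimes\bigotimes_{j=1}^m\Lambda(\alpha_j,\beta_j,\gamma_j)/(\alpha_j+\beta_j+\gamma_j)$ with $\alpha_j,\beta_j,\gamma_j$ of degree 1 (this is $H^*(G_2/T\times T^m;\mathbb{Q})$ for $T$ a maximal torus of $SU(3)\subset G_2$). The symmetric group $\mathfrak{S}_3$ (the Weyl group of $SU(3)$) acts on $\mathcal{K}(m)$ by permuting $x,y,w$ and simultaneously permuting each triple $(\alpha_j,\beta_j,\gamma_j)$ in the same way. For $I=\{i_1<\dots<i_k\}$ put $\alpha_I=\alpha_{i_1}\cdots\alpha_{i_k}$ ($\alpha_\emptyset=1$), similarly $\beta_I,\gamma_I$, and for $d\ge0$ put $z(d+1,I)=x^d\alpha_I+y^d\beta_I+w^d\gamma_I$. *)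

(* K(m) is modelled by its presentation: the free
   (non-commutative) Q-algebra on generators x,y,w (even) and
   alpha_j,beta_j,gamma_j (odd), modulo the congruence generated by the
   Q-algebra axioms, graded commutativity (even generators central, odd
   generators anticommute and square to zero), the ideal J and the
   relations alpha_j+beta_j+gamma_j = 0. *)
From mathcomp Require Import all_boot all_order all_algebra all_fingroup.
Set Implicit Arguments. Unset Strict Implicit. Unset Printing Implicit Defensive.
Import GRing.Theory.
Local Open Scope ring_scope.

(* Even generators: index 0 = x, 1 = y, 2 = w.
   Odd generators: tO j 0 = alpha_(j+1), tO j 1 = beta_(j+1), tO j 2 = gamma_(j+1). *)
Inductive term (m : nat) : Type :=
| tC : rat -> term m
| tE : 'I_3 -> term m
| tO : 'I_m -> 'I_3 -> term m
| tAdd : term m -> term m -> term m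
| tMul : term m -> term m -> term m.
Arguments tC {m}. Arguments tE {m}. Arguments tO {m}.

Definition tpow m (t : term m) (n : nat) : term m := iter n (tMul t) (tC 1).

Definition xg {m} : term m := tE (inord 0).
Definition yg {m} : term m := tE (inord 1).
Definition wg {m} : term m := tE (inord 2).

Inductive eqv (m : nat) : term m -> term m -> Prop :=
| eqv_refl t : eqv t t
| eqv_sym t u : eqv t u -> eqv u t
| eqv_trans t u v : eqv t u -> eqv u v -> eqv t v
| eqv_add t t' u u' : eqv t t' -> eqv u u' -> eqv (tAdd t u) (tAdd t' u')
| eqv_mul t t' u u' : eqv t t' -> eqv u u' -> eqv (tMul t u) (tMul t' u')
| eqv_addA t u v : eqv (tAdd t (tAdd u v)) (tAdd (tAdd t u) v)
| eqv_addC t u : eqv (tAdd t u) (tAdd u t)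
| eqv_add0 t : eqv (tAdd (tC 0) t) t
| eqv_addN t : eqv (tAdd t (tMul (tC (-1)) t)) (tC 0)
| eqv_mulA t u v : eqv (tMul t (tMul u v)) (tMul (tMul t u) v)
| eqv_mul1l t : eqv (tMul (tC 1) t) t
| eqv_mul1r t : eqv (tMul t (tC 1)) t
| eqv_mulDl t u v : eqv (tMul (tAdd t u) v) (tAdd (tMul t v) (tMul u v))
| eqv_mulDr t u v : eqv (tMul t (tAdd u v)) (tAdd (tMul t u) (tMul t v))
| eqv_CD a b : eqv (tAdd (tC a) (tC b)) (tC (a + b))
| eqv_CM a b : eqv (tMul (tC a) (tC b)) (tC (a * b))
| eqv_Ccomm a t : eqv (tMul (tC a) t) (tMul t (tC a))
| eqv_Ecomm i t : eqv (tMul (tE i) t) (tMul t (tE i))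
| eqv_Oanti j k j' k' :
    eqv (tMul (tO j k) (tO j' k')) (tMul (tC (-1)) (tMul (tO j' k') (tO j k)))
| eqv_Osq j k : eqv (tMul (tO j k) (tO j k)) (tC 0)
| eqv_J1 : eqv (tAdd xg (tAdd yg wg)) (tC 0)
| eqv_J2 : eqv (tAdd (tpow xg 2) (tAdd (tpow yg 2) (tpow wg 2))) (tC 0)
| eqv_J6 : eqv (tAdd (tpow xg 6) (tAdd (tpow yg 6) (tpow wg 6))) (tC 0)
| eqv_lin j : eqv (tAdd (tO j (inord 0)) (tAdd (tO j (inord 1)) (tO j (inord 2)))) (tC 0).

Fixpoint act m (s : {perm 'I_3}) (t : term m) : term m :=
  match t with
  | tC a => tC a
  | tE i => tE (s i)
  | tO j k => tO j (s k)
  | tAdd t u => tAdd (act s t) (act s u)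
  | tMul t u => tMul (act s t) (act s u)
  end.

Definition S3_invariant m (t : term m) : Prop := forall s : {perm 'I_3}, eqv (act s t) t.

(* alpha_I (k = 0), beta_I (k = 1), gamma_I (k = 2): ordered product over i1 < ... < ik *)
Definition oprod m (I : {set 'I_m}) (k : 'I_3) : term m :=
  foldr (fun j acc => tMul (tO j k) acc) (tC 1) [seq j <- enum 'I_m | j \in I].

Definition zgen m (i : nat) (I : {set 'I_m}) : term m :=
  tAdd (tMul (tpow xg i.-1) (oprod I (inord 0)))
       (tAdd (tMul (tpow yg i.-1) (oprod I (inord 1)))
             (tMul (tpow wg i.-1) (oprod I (inord 2)))).

Inductive in_gen (m : nat) : term m -> Prop :=
| gen_C a : in_gen (tC a)
| gen_z (i : nat) (I : {set 'I_m}) : (1 <= i <= 6)%N -> (#|I| <= 3)%N -> in_gen (zgen i I)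
| gen_add t u : in_gen t -> in_gen u -> in_gen (tAdd t u)
| gen_mul t u : in_gen t -> in_gen u -> in_gen (tMul t u).

(* Averaging over S_3 turns an invariant into a sixth of its Reynolds image,
   and expanding into monomials reduces the claim to the symmetrisations S(c)
   of monomials c whose factors carry colours: (x, alpha_j), (y, beta_j) or
   (w, gamma_j).  The product of S(c) with the power sum q(B) = B_x + B_y + B_w
   of a word B is the sum of the S(c B_k) over the three colours k; when k
   already occurs in c, B_k merges into a shorter monomial, and the remaining
   terms are all equal, so by induction on the length of c every S(c) is a
   polynomial in the q(B).  Up to a scalar q(B) is some z(a+1, I).  Finally
   z(a+1, I) = z(4, {}) z(a-2, I) / 3 for a >= 6, because e_1 = e_2 = 0 forces
   x^3 = p_3 / 3, and for |I| >= 4 a six-term identity, a consequence of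
   alpha_j + beta_j + gamma_j = 0, expresses 6 z(a+1, I) through products of
   z's with smaller index sets.  Both identities are checked by a reflexive
   normaliser for supercommutative polynomials. *)

From Pilot Require Import Defs.
From mathcomp Require Import all_boot all_order all_algebra all_fingroup.
From mathcomp Require Import zify.
From Stdlib Require Import Setoid Morphisms.
Set Implicit Arguments. Unset Strict Implicit. Unset Printing Implicit Defensive.
Import Order.TTheory GRing.Theory Num.Theory.
Local Open Scope ring_scope.

Local Notation "a ~ b" := (eqv a b) (at level 70).
Local Notation "a +' b" := (tAdd a b) (at level 50, left associativity).
Local Notation "a *' b" := (tMul a b) (at level 40, left associativity).

#[local] Instance eqv_Equivalence m : Equivalence (@eqv m).
Proof. split; [exact: eqv_refl | exact: eqv_sym | exact: eqv_trans]. Qed.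

#[local] Instance tAdd_Proper m : Proper (@eqv m ==> @eqv m ==> @eqv m) (@tAdd m).
Proof. by move=> ? ? ? ? ? ?; apply: eqv_add. Qed.

#[local] Instance tMul_Proper m : Proper (@eqv m ==> @eqv m ==> @eqv m) (@tMul m).
Proof. by move=> ? ? ? ? ? ?; apply: eqv_mul. Qed.

#[local] Hint Resolve eqv_refl : core.

Section TermAlgebra.
Variable m : nat.
Implicit Types t u v : term m.

Lemma eqv_addr0 t : t +' tC 0 ~ t.
Proof. by rewrite eqv_addC eqv_add0. Qed.

Lemma eqv_addCA t u v : t +' (u +' v) ~ u +' (t +' v).
Proof. by rewrite eqv_addA (eqv_addC t u) -eqv_addA. Qed.

Lemma eqv_addACA t u v w : t +' u +' (v +' w) ~ t +' v +' (u +' w).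
Proof. by rewrite -!eqv_addA (eqv_addCA u). Qed.

Lemma eqv_addKl t u : tC (-1) *' t +' (t +' u) ~ u.
Proof. by rewrite eqv_addA (eqv_addC _ t) eqv_addN eqv_add0. Qed.

Lemma eqv_addI t u v : t +' u ~ t +' v -> u ~ v.
Proof. by move=> E; rewrite -(eqv_addKl t u) E eqv_addKl. Qed.

Lemma eqv_solve_last t0 t1 t2 : t0 +' (t1 +' t2) ~ tC 0 -> t2 ~ tC (-1) *' (t0 +' t1).
Proof. by move=> sum0; apply: (@eqv_addI (t0 +' t1)); rewrite eqv_addN -eqv_addA. Qed.

Lemma eqv_scaleA a b t : tC a *' (tC b *' t) ~ tC (a * b) *' t.
Proof. by rewrite eqv_mulA eqv_CM. Qed.

Lemma eqv_scaleDl a b t : tC a *' t +' tC b *' t ~ tC (a + b) *' t.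
Proof. by rewrite -eqv_mulDl eqv_CD. Qed.

Lemma eqv_scaleAl a t u : tC a *' t *' u ~ tC a *' (t *' u).
Proof. by rewrite eqv_mulA. Qed.

Lemma eqv_scaleAr a t u : t *' (tC a *' u) ~ tC a *' (t *' u).
Proof. by rewrite eqv_mulA -eqv_Ccomm eqv_mulA. Qed.

Lemma eqv_scaleK a t : a != 0 -> tC a^-1 *' (tC a *' t) ~ t.
Proof. by move=> a_neq0; rewrite eqv_scaleA mulVf // eqv_mul1l. Qed.

Lemma eqv_mul0r t : tC 0 *' t ~ tC 0.
Proof. by apply: (@eqv_addI (tC 0 *' t)); rewrite eqv_scaleDl addr0 eqv_addr0. Qed.

Lemma eqv_mulr0 t : t *' tC 0 ~ tC 0.
Proof. by rewrite -eqv_Ccomm eqv_mul0r. Qed.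

Definition tsum (l : seq (term m)) : term m := foldr (@tAdd m) (tC 0) l.
Definition tprod (l : seq (term m)) : term m := foldr (@tMul m) (tC 1) l.

Lemma tsum_cat l1 l2 : tsum (l1 ++ l2) ~ tsum l1 +' tsum l2.
Proof. by elim: l1 => [|t l IH] /=; rewrite ?eqv_add0 // IH eqv_addA. Qed.

Lemma tprod_cat l1 l2 : tprod (l1 ++ l2) ~ tprod l1 *' tprod l2.
Proof. by elim: l1 => [|t l IH] /=; rewrite ?eqv_mul1l // IH eqv_mulA. Qed.

Lemma eqv_tsum_in (T : eqType) (f g : T -> term m) (l : seq T) :
  (forall x, x \in l -> f x ~ g x) -> tsum (map f l) ~ tsum (map g l).
Proof.
elim: l => [|x l IH] //= fg; rewrite fg ?mem_head // IH // => y yl.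
by rewrite fg // inE yl orbT.
Qed.

Lemma eqv_tsum (T : Type) (f g : T -> term m) l :
  (forall x, f x ~ g x) -> tsum (map f l) ~ tsum (map g l).
Proof. by move=> fg; elim: l => [|x l IH] //=; rewrite fg IH. Qed.

Lemma tsum_split (T : Type) (f g : T -> term m) l :
  tsum [seq f x +' g x | x <- l] ~ tsum (map f l) +' tsum (map g l).
Proof. by elim: l => [|x l IH] /=; rewrite ?eqv_add0 // IH eqv_addACA. Qed.

Lemma tsum_distrr (T : Type) (f : T -> term m) t l :
  t *' tsum (map f l) ~ tsum [seq t *' f x | x <- l].
Proof. by elim: l => [|x l IH] /=; rewrite ?eqv_mulr0 // eqv_mulDr IH. Qed.

Lemma tsum_distrl (T : Type) (f : T -> term m) t l :
  tsum (map f l) *' t ~ tsum [seq f x *' t | x <- l].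
Proof. by elim: l => [|x l IH] /=; rewrite ?eqv_mul0r // eqv_mulDl IH. Qed.

Lemma perm_tsum (T : eqType) (f : T -> term m) (l1 l2 : seq T) :
  perm_eq l1 l2 -> tsum (map f l1) ~ tsum (map f l2).
Proof.
elim: l1 l2 => [|x l1 IH] l2 l12; first by move: l12; rewrite perm_sym => /perm_nilP ->.
have x_l2 : x \in l2 by rewrite -(perm_mem l12) mem_head.
case/splitPr: l2 / x_l2 l12 => a b l12.
have /IH IHab : perm_eq l1 (a ++ b).
  by rewrite -(perm_cons x) (perm_trans l12) // -cat1s perm_catCA.
by rewrite /= IHab !map_cat !tsum_cat /= eqv_addCA.
Qed.

Lemma tsum_const (T : eqType) (f : T -> term m) (l : seq T) t :
  (forall x, x \in l -> f x ~ t) -> tsum (map f l) ~ tC (size l)%:R *' t.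
Proof.
move=> /eqv_tsum_in ->; elim: l => [|x l IH] /=; first by rewrite eqv_mul0r.
by rewrite IH -{1}(eqv_mul1l t) eqv_scaleDl -natr1 addrC.
Qed.

Lemma tsum_delta (T : eqType) (W : seq T) x t :
  uniq W -> x \in W -> tsum [seq if x == w then t else tC 0 | w <- W] ~ t.
Proof.
elim: W => [|w W IH] //= /andP[wW uW]; rewrite inE => /predU1P[xw|xW].
  subst w; rewrite eqxx (tsum_const (t := tC 0)) ?eqv_mulr0 ?eqv_addr0 // => y yW.
  by case: eqP => // xy; rewrite xy yW in wW.
have /negPf -> : x != w by apply: contraNneq wW => <-.
by rewrite IH // eqv_add0.
Qed.

Lemma exchange_tsum (A B : Type) (f : A -> B -> term m) l1 l2 :
  tsum [seq tsum [seq f i j | j <- l2] | i <- l1] ~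
  tsum [seq tsum [seq f i j | i <- l1] | j <- l2].
Proof.
elim: l1 => [|x l1 IH] /=; last by rewrite IH -tsum_split.
by elim: l2 => [|y l2 IH2] //=; rewrite -IH2 eqv_add0.
Qed.

Lemma tsumID (T : Type) (p : pred T) (f : T -> term m) l :
  tsum (map f l) ~ tsum (map f (filter p l)) +' tsum (map f (filter (predC p) l)).
Proof.
elim: l => [|x l IH] /=; first by rewrite eqv_add0.
by case: (p x) => /=; rewrite IH; [rewrite eqv_addA | rewrite eqv_addCA].
Qed.

End TermAlgebra.

Definition ksign (p q : bool) : rat := if p && q then -1 else 1.

Lemma ksignDl p1 p2 q : ksign (p1 (+) p2) q = ksign p1 q * ksign p2 q.
Proof. by case: p1; case: p2; case: q; rewrite /ksign /= ?mulr1 ?mul1r ?mulrNN ?mulr1. Qed.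

Lemma ksignDr p q1 q2 : ksign p (q1 (+) q2) = ksign p q1 * ksign p q2.
Proof. by case: p; case: q1; case: q2; rewrite /ksign /= ?mulr1 ?mul1r ?mulrNN ?mulr1. Qed.

Lemma ksignC p q : ksign p q = ksign q p.
Proof. by rewrite /ksign andbC. Qed.

Section Homogeneous.
Variable m : nat.
Implicit Types t u v : term m.

Inductive homog : bool -> term m -> Prop :=
| homogC a : homog false (tC a)
| homog0 p : homog p (tC 0)
| homogE i : homog false (tE i)
| homogO j k : homog true (tO j k)
| homogD p t u : homog p t -> homog p u -> homog p (t +' u)
| homogM p q t u : homog p t -> homog q u -> homog (p (+) q) (t *' u).

Lemma homog_comm p q t u : homog p t -> homog q u -> t *' u ~ tC (ksign p q) *' (u *' t).
Proof.
move=> Ht; elim: Ht q u => {p t}.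
- by move=> a q u _; rewrite /ksign /= eqv_Ccomm eqv_mul1l.
- by move=> p q u _; rewrite eqv_mul0r !eqv_mulr0.
- by move=> i q u _; rewrite /ksign /= eqv_mul1l eqv_Ecomm.
- move=> j k q u; elim=> {q u}.
  + by move=> a; rewrite /ksign /= eqv_mul1l eqv_Ccomm.
  + by move=> p; rewrite eqv_mul0r !eqv_mulr0.
  + by move=> i; rewrite /ksign /= eqv_mul1l eqv_Ecomm.
  + by move=> j' k'; rewrite /ksign /= eqv_Oanti.
  + by move=> p t u _ IHt _ IHu; rewrite eqv_mulDr IHt IHu -eqv_mulDr -eqv_mulDl.
  + move=> p q t u _ IHt _ IHu.
    rewrite eqv_mulA IHt eqv_scaleAl -eqv_mulA IHu eqv_scaleAr eqv_scaleA.
    by rewrite ksignDr mulrC !eqv_mulA.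
- move=> p t u _ IHt _ IHu q v Hv.
  by rewrite eqv_mulDl (IHt _ _ Hv) (IHu _ _ Hv) -eqv_mulDr -eqv_mulDr.
- move=> p1 p2 t u _ IHt _ IHu q v Hv.
  rewrite -eqv_mulA (IHu _ _ Hv) eqv_scaleAr (eqv_mulA t v u) (IHt _ _ Hv).
  by rewrite eqv_scaleAl eqv_scaleA ksignDl mulrC !eqv_mulA.
Qed.

Lemma homog_tpow t n : homog false t -> homog false (tpow t n).
Proof. by move=> Ht; elim: n => [|n IH] /=; [exact: homogC | exact: (homogM Ht IH)]. Qed.

Lemma tpowD t a b : tpow t (a + b) ~ tpow t a *' tpow t b.
Proof. by elim: a => [|a IH] /=; rewrite ?eqv_mul1l // IH eqv_mulA. Qed.

End Homogeneous.

Lemma enum_ord3 : enum 'I_3 = [:: inord 0; inord 1; inord 2].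
Proof. by apply: (inj_map val_inj); rewrite val_enum_ord /= !inordK. Qed.

Lemma perm_map_enum (T : finType) (s : {perm T}) : perm_eq (map s (enum T)) (enum T).
Proof.
apply: uniq_perm; rewrite ?enum_uniq ?(map_inj_uniq (@perm_inj _ s)) ?enum_uniq //.
by move=> x; rewrite mem_enum -(permKV s x) map_f ?mem_enum.
Qed.

Section Action.
Variable m : nat.
Implicit Types t u v : term m.

Lemma tsum_ord3 (f : 'I_3 -> term m) :
  tsum (map f (enum 'I_3)) ~ f (inord 0) +' (f (inord 1) +' f (inord 2)).
Proof. by rewrite enum_ord3 /= eqv_addr0. Qed.

Lemma tsum_reindex_perm (T : finType) (s : {perm T}) (f : T -> term m) :
  tsum [seq f (s k) | k <- enum T] ~ tsum (map f (enum T)).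
Proof. by rewrite (map_comp f s) (perm_tsum f (perm_map_enum s)). Qed.

Lemma act_eqv (s : {perm 'I_3}) t u : t ~ u -> Defs.act s t ~ Defs.act s u.
Proof.
have sum3 (f : 'I_3 -> term m) :
    f (s (inord 0)) +' (f (s (inord 1)) +' f (s (inord 2))) ~
    f (inord 0) +' (f (inord 1) +' f (inord 2)).
  by have := tsum_reindex_perm s f; rewrite enum_ord3 /= !eqv_addr0.
(* Every rule other than those of J and [eqv_lin] maps to an instance of
   itself. *)
elim=> {t u} /=; try by (intros; econstructor; eauto).
- by rewrite (sum3 (@tE m)); exact: eqv_J1.
- by rewrite (sum3 (fun k => tpow (tE k) 2)); exact: eqv_J2.
- by rewrite (sum3 (fun k => tpow (tE k) 6)); exact: eqv_J6.
- by move=> j; rewrite (sum3 (tO j)); exact: eqv_lin.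
Qed.

End Action.

Inductive sexpr :=
| SVar of nat
| SConst of rat
| SAdd of sexpr & sexpr
| SMul of sexpr & sexpr.

Definition monom := (rat * seq nat)%type.

Fixpoint monoms (e : sexpr) : seq monom :=
  match e with
  | SVar i => [:: (1, [:: i])]
  | SConst c => [:: (c, [::])]
  | SAdd e1 e2 => monoms e1 ++ monoms e2
  | SMul e1 e2 => [seq (p.1 * q.1, p.2 ++ q.2) | p <- monoms e1, q <- monoms e2]
  end.

Fixpoint subst (s : nat -> sexpr) (e : sexpr) : sexpr :=
  match e with
  | SVar i => s i
  | SConst c => SConst c
  | SAdd e1 e2 => SAdd (subst s e1) (subst s e2)
  | SMul e1 e2 => SMul (subst s e1) (subst s e2)
  end.

Definition ssum3 (f : nat -> sexpr) := SAdd (f 0%N) (SAdd (f 1%N) (f 2%N)).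

Fixpoint spow (e : sexpr) (n : nat) : sexpr :=
  if n is n'.+1 then SMul e (spow e n') else SConst 1.

(* Eliminates the last variable of each of the first [bound / 3] triples
   [3r, 3r+1, 3r+2] of variables, through the relation [x + y + w = 0],
   resp. [alpha_j + beta_j + gamma_j = 0]. *)
Definition elim_third (bound n : nat) : sexpr :=
  if ((n < bound) && (n %% 3 == 2))%N then SMul (SConst (-1)) (SAdd (SVar n.-2) (SVar n.-1))
  else SVar n.

(* Words are sorted by insertion, each transposition of adjacent variables
   contributing its Koszul sign; squares of odd variables are not cancelled,
   which costs completeness but not soundness. *)
Section SortWord.
Variable parity : nat -> bool.

Fixpoint insert_var (i : nat) (w : seq nat) : rat * seq nat :=
  match w with
  | [::] => (1, [:: i])
  | j :: w' => if (i <= j)%N then (1, i :: j :: w')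
               else let r := insert_var i w' in (r.1 * ksign (parity i) (parity j), j :: r.2)
  end.

Definition sort_word (w : seq nat) : rat * seq nat :=
  foldr (fun i acc => let r := insert_var i acc.2 in (acc.1 * r.1, r.2)) (1, [::]) w.

Definition sort_monoms (l : seq monom) : seq monom :=
  [seq (p.1 * (sort_word p.2).1, (sort_word p.2).2) | p <- l].

End SortWord.

Definition coef (l : seq monom) (w : seq nat) : rat :=
  foldr (fun p acc => if p.2 == w then p.1 + acc else acc) 0 l.

Definition monoms_eqb (l1 l2 : seq monom) : bool :=
  all (fun w => coef l1 w == coef l2 w) (undup (map snd (l1 ++ l2))).

Definition normal_eqb parity s (e1 e2 : sexpr) : bool :=
  monoms_eqb (sort_monoms parity (monoms (subst s e1)))
             (sort_monoms parity (monoms (subst s e2))).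

Section Normalisation.
Variables (m : nat) (env : nat -> term m).
Implicit Types t u v : term m.

Fixpoint eval (e : sexpr) : term m :=
  match e with
  | SVar i => env i
  | SConst c => tC c
  | SAdd e1 e2 => eval e1 +' eval e2
  | SMul e1 e2 => eval e1 *' eval e2
  end.

Definition eval_monom (p : monom) : term m := tC p.1 *' tprod (map env p.2).
Definition eval_monoms (l : seq monom) : term m := tsum (map eval_monom l).

Lemma eval_monoms_cat l1 l2 : eval_monoms (l1 ++ l2) ~ eval_monoms l1 +' eval_monoms l2.
Proof. by rewrite /eval_monoms map_cat tsum_cat. Qed.

Lemma eval_monomM p q : eval_monom p *' eval_monom q ~ eval_monom (p.1 * q.1, p.2 ++ q.2).
Proof. by rewrite /eval_monom /= map_cat tprod_cat eqv_scaleAl eqv_scaleAr eqv_scaleA eqv_mulA. Qed.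

Lemma eval_monomsM l1 l2 :
  eval_monoms l1 *' eval_monoms l2 ~
  eval_monoms [seq (p.1 * q.1, p.2 ++ q.2) | p <- l1, q <- l2].
Proof.
elim: l1 => [|p l1 IH] /=; first by rewrite eqv_mul0r.
rewrite eval_monoms_cat -IH eqv_mulDl /eval_monoms tsum_distrr -map_comp.
by rewrite (eqv_tsum _ (eval_monomM p)).
Qed.

Lemma eval_monoms_correct e : eval e ~ eval_monoms (monoms e).
Proof.
elim: e => [i|c|e1 IH1 e2 IH2|e1 IH1 e2 IH2] /=.
- by rewrite /eval_monoms /eval_monom /= eqv_mul1l eqv_addr0 eqv_mul1r.
- by rewrite /eval_monoms /eval_monom /= eqv_addr0 eqv_mul1r.
- by rewrite eval_monoms_cat IH1 IH2.
- by rewrite IH1 IH2 eval_monomsM.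
Qed.

Lemma eval_subst s e : (forall i, env i ~ eval (s i)) -> eval e ~ eval (subst s e).
Proof. by move=> Hs; elim: e => [i|c|e1 IH1 e2 IH2|e1 IH1 e2 IH2] //=; rewrite IH1 IH2. Qed.

Lemma eval_monoms_coef l W : uniq W -> {subset map snd l <= W} ->
  eval_monoms l ~ tsum [seq tC (coef l w) *' tprod (map env w) | w <- W].
Proof.
move=> uW; elim: l => [|p l IH] lW.
  by rewrite /eval_monoms /= (tsum_const (t := tC 0)) ?eqv_mulr0 // => w _; rewrite eqv_mul0r.
rewrite /eval_monoms /= -/(eval_monoms l) IH => [|w wl]; last by rewrite lW // inE wl orbT.
rewrite -(tsum_delta (eval_monom p) uW (lW _ (mem_head _ _))) -tsum_split.
apply: eqv_tsum => w /=; case: eqP => [<-|_]; last by rewrite eqv_add0.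
by rewrite eqv_scaleDl.
Qed.

Variable parity : nat -> bool.
Hypothesis env_comm :
  forall i j, env i *' env j ~ tC (ksign (parity i) (parity j)) *' (env j *' env i).

Lemma insert_var_correct i w :
  env i *' tprod (map env w) ~
  tC (insert_var parity i w).1 *' tprod (map env (insert_var parity i w).2).
Proof.
elim: w => [|j w IH] /=; first by rewrite eqv_mul1l.
case: leqP => _ /=; first by rewrite eqv_mul1l.
rewrite eqv_mulA env_comm eqv_scaleAl -eqv_mulA IH eqv_scaleAr eqv_scaleA.
by rewrite mulrC.
Qed.

Lemma sort_word_correct w :
  tprod (map env w) ~ tC (sort_word parity w).1 *' tprod (map env (sort_word parity w).2).
Proof.
elim: w => [|i w IH] /=; first by rewrite eqv_mul1l.
by rewrite IH eqv_scaleAr insert_var_correct eqv_scaleA.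
Qed.

Lemma sort_monoms_correct l : eval_monoms l ~ eval_monoms (sort_monoms parity l).
Proof.
rewrite /eval_monoms /sort_monoms -map_comp; apply: eqv_tsum => p /=.
by rewrite /eval_monom /= sort_word_correct eqv_scaleA.
Qed.

Lemma monoms_eqb_sound l1 l2 :
  monoms_eqb l1 l2 -> eval_monoms l1 ~ eval_monoms l2.
Proof.
move=> /allP; set W := undup _ => l12.
have uW : uniq W by exact: undup_uniq.
rewrite (@eval_monoms_coef l1 W) => [|//|w wl]; last by rewrite mem_undup map_cat mem_cat wl.
rewrite (@eval_monoms_coef l2 W) => [|//|w wl]; last by rewrite mem_undup map_cat mem_cat wl orbT.
by apply: eqv_tsum_in => w /l12 /eqP ->.
Qed.

Theorem normal_eqb_sound s e1 e2 :
  (forall i, env i ~ eval (s i)) -> normal_eqb parity s e1 e2 -> eval e1 ~ eval e2.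
Proof.
move=> Hs /monoms_eqb_sound.
by rewrite -!sort_monoms_correct -!eval_monoms_correct -!eval_subst.
Qed.

End Normalisation.

Definition generated m (t : term m) := exists u, in_gen u /\ u ~ t.

#[local] Instance generated_Proper m : Proper (@eqv m ==> iff) (@generated m).
Proof.
move=> t t' tt'; split=> -[u [gu ut]]; exists u; split=> //.
  by rewrite ut.
by rewrite ut tt'.
Qed.

Section Generated.
Variable m : nat.
Implicit Types t u v : term m.

Lemma generatedC a : generated (@tC m a).
Proof. by exists (tC a); split; first exact: gen_C. Qed.

Lemma generatedD t u : generated t -> generated u -> generated (t +' u).
Proof. by move=> [t' [gt <-]] [u' [gu <-]]; exists (t' +' u'); split; first exact: gen_add. Qed.

Lemma generatedM t u : generated t -> generated u -> generated (t *' u).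
Proof. by move=> [t' [gt <-]] [u' [gu <-]]; exists (t' *' u'); split; first exact: gen_mul. Qed.

Lemma generatedZ a t : generated t -> generated (tC a *' t).
Proof. exact/generatedM/generatedC. Qed.

Lemma generatedZ_inv a t : a != 0 -> generated (tC a *' t) -> generated t.
Proof. by move=> a_neq0 /(generatedZ a^-1); rewrite eqv_scaleK. Qed.

Lemma generatedDr t u : generated t -> generated (t +' u) -> generated u.
Proof. by move=> /(generatedZ (-1)) gt /(generatedD gt); rewrite eqv_addKl. Qed.

Lemma generated_tsum (T : eqType) (f : T -> term m) (l : seq T) :
  (forall x, x \in l -> generated (f x)) -> generated (tsum (map f l)).
Proof.
elim: l => [|x l IH] gl /=; first exact: generatedC.
apply: generatedD; first by apply: gl; rewrite mem_head.
by apply: IH => y yl; apply: gl; rewrite inE yl orbT.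
Qed.

End Generated.

(* A letter is an even generator ([None]) or the odd generator of index [j]
   ([Some j]); in colour [k] it stands for [x_k], resp. the [k]-th element of
   [(alpha_j, beta_j, gamma_j)].  A configuration is a word of coloured
   subwords; every monomial of K(m) is the value of a configuration. *)
Section Configurations.
Variable m : nat.
Implicit Types t u v : term m.

Local Notation letter := (option 'I_m).

Definition colored_gen (k : 'I_3) (x : letter) : term m :=
  if x is Some j then tO j k else tE k.

Definition word_parity (B : seq letter) : bool := foldr (fun x b => isSome x (+) b) false B.

Definition colored (k : 'I_3) (B : seq letter) : term m := tprod (map (colored_gen k) B).

Definition config := seq ('I_3 * seq letter).

Definition config_monom (c : config) : term m := tprod [seq colored p.1 p.2 | p <- c].

Definition config_parity (c : config) : bool := foldr (fun p b => word_parity p.2 (+) b) false c.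

Definition config_act (s : {perm 'I_3}) (c : config) : config := [seq (s p.1, p.2) | p <- c].

Definition config_colors (c : config) := [seq p.1 | p <- c].

Definition perms3 := enum {perm 'I_3}.

Definition reynolds t := tsum [seq Defs.act s t | s <- perms3].

Definition symmetrize (c : config) := tsum [seq config_monom (config_act s c) | s <- perms3].

Definition power_sum (B : seq letter) := tsum [seq colored k B | k <- enum 'I_3].

Lemma homog_colored k B : homog (word_parity B) (colored k B).
Proof.
elim: B => [|[j|] B IH] /=; first exact: homogC.
  exact: (homogM (homogO j k) IH).
exact: (homogM (homogE m k) IH).
Qed.

Lemma homog_config_monom c : homog (config_parity c) (config_monom c).
Proof. by elim: c => [|p c IH] /=; [exact: homogC | exact: (homogM (homog_colored _ _) IH)]. Qed.

Lemma config_parity_act s c : config_parity (config_act s c) = config_parity c.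
Proof. by elim: c => //= p c ->. Qed.

Lemma act_colored s k B : Defs.act s (colored k B) = colored (s k) B.
Proof. by elim: B => [|[j|] B] //= ->. Qed.

Lemma act_config_monom s c : Defs.act s (config_monom c) = config_monom (config_act s c).
Proof. by elim: c => //= p c ->; rewrite act_colored. Qed.

Lemma config_actM s1 s2 c : config_act s1 (config_act s2 c) = config_act (s2 * s1)%g c.
Proof. by rewrite /config_act -map_comp; apply: eq_map => p /=; rewrite permM. Qed.

Lemma config_act_cat s c1 c2 : config_act s (c1 ++ c2) = config_act s c1 ++ config_act s c2.
Proof. exact: map_cat. Qed.

Lemma colored_cat k B1 B2 : colored k (B1 ++ B2) ~ colored k B1 *' colored k B2.
Proof. by rewrite /colored map_cat tprod_cat. Qed.

Lemma config_monom_cat c1 c2 : config_monom (c1 ++ c2) ~ config_monom c1 *' config_monom c2.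
Proof. by rewrite /config_monom map_cat tprod_cat. Qed.

Lemma config_monom_cons k B c : config_monom ((k, B) :: c) = colored k B *' config_monom c.
Proof. by []. Qed.

Lemma config_monom1 k B : config_monom [:: (k, B)] ~ colored k B.
Proof. exact: eqv_mul1r. Qed.

Lemma size_perms3 : size perms3 = 6%N.
Proof. by rewrite /perms3 -cardE card_Sn. Qed.

Lemma invariant_reynolds t : S3_invariant t -> t ~ tC 6%:R^-1 *' reynolds t.
Proof. by move=> t_inv; rewrite /reynolds (tsum_const (t := t)) ?size_perms3 ?eqv_scaleK. Qed.

Lemma reynolds_eqv t u : t ~ u -> reynolds t ~ reynolds u.
Proof. by move=> tu; apply: eqv_tsum => s; exact: act_eqv. Qed.

Lemma tsum_perms3_mull (f : {perm 'I_3} -> term m) (r : {perm 'I_3}) :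
  tsum [seq f (r * s)%g | s <- perms3] ~ tsum (map f perms3).
Proof.
have mul_inj : injective (fun s : {perm 'I_3} => (r * s)%g) by exact: mulgI.
rewrite -(tsum_reindex_perm (perm mul_inj) f); apply: eqv_tsum => s.
by rewrite permE.
Qed.

Lemma symmetrize_act r c : symmetrize (config_act r c) ~ symmetrize c.
Proof.
rewrite /symmetrize -(tsum_perms3_mull (fun s => config_monom (config_act s c)) r).
by apply: eqv_tsum => s; rewrite config_actM.
Qed.

Lemma symmetrizeM_power_sum c B :
  symmetrize c *' power_sum B ~ tsum [seq symmetrize (rcons c (k, B)) | k <- enum 'I_3].
Proof.
rewrite /symmetrize tsum_distrl -exchange_tsum; apply: eqv_tsum => s.
rewrite /power_sum tsum_distrr -(tsum_reindex_perm s); apply: eqv_tsum => k.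
by rewrite -cats1 config_act_cat config_monom_cat config_monom1.
Qed.

(* Both colour-[k0] words get the same permuted colour, so they merge at the
   cost of moving [B] across [c2]. *)
Lemma symmetrize_merge c1 k0 B1 c2 B :
  symmetrize (rcons (c1 ++ (k0, B1) :: c2) (k0, B)) ~
  tC (ksign (word_parity B) (config_parity c2)) *' symmetrize (c1 ++ (k0, B1 ++ B) :: c2).
Proof.
rewrite /symmetrize tsum_distrr; apply: eqv_tsum => s.
have -> : config_act s (rcons (c1 ++ (k0, B1) :: c2) (k0, B)) =
          config_act s c1 ++ (s k0, B1) :: config_act s c2 ++ [:: (s k0, B)].
  by rewrite /config_act map_rcons map_cat -cats1 -catA.
rewrite !config_act_cat !config_monom_cat !config_monom_cons config_monom_cat config_monom1.
rewrite (homog_comm (homog_config_monom (config_act s c2)) (homog_colored (s k0) B)).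
rewrite config_parity_act ksignC colored_cat.
by rewrite !eqv_scaleAr -!eqv_mulA.
Qed.

Lemma symmetrize_recolor c k k' B :
  k \notin config_colors c -> k' \notin config_colors c ->
  symmetrize (rcons c (k, B)) ~ symmetrize (rcons c (k', B)).
Proof.
move=> kc k'c.
have fix_c : config_act (tperm k k') c = c.
  elim: c kc k'c => [|[x Bx] c IH] //=; rewrite !inE !negb_or => /andP[kx kc] /andP[k'x k'c].
  by rewrite IH // tpermD // eq_sym.
by rewrite -(symmetrize_act (tperm k k')) /config_act map_rcons -/(config_act _ c) fix_c /= tpermL.
Qed.

Fixpoint config_expansion t : seq (rat * config) :=
  match t with
  | tC a => [:: (a, [::])]
  | tE i => [:: (1, [:: (i, [:: None])])]
  | tO j k => [:: (1, [:: (k, [:: Some j])])]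
  | tAdd t u => config_expansion t ++ config_expansion u
  | tMul t u => [seq (p.1 * q.1, p.2 ++ q.2) | p <- config_expansion t, q <- config_expansion u]
  end.

Definition eval_configs (l : seq (rat * config)) : term m :=
  tsum [seq tC p.1 *' config_monom p.2 | p <- l].

Lemma eval_configs_cat l1 l2 : eval_configs (l1 ++ l2) ~ eval_configs l1 +' eval_configs l2.
Proof. by rewrite /eval_configs map_cat tsum_cat. Qed.

Lemma eval_configsM l1 l2 :
  eval_configs l1 *' eval_configs l2 ~
  eval_configs [seq (p.1 * q.1, p.2 ++ q.2) | p <- l1, q <- l2].
Proof.
elim: l1 => [|p l1 IH] /=; first by rewrite eqv_mul0r.
rewrite eval_configs_cat -IH eqv_mulDl /eval_configs tsum_distrr -map_comp.
apply: eqv_add => //; apply: eqv_tsum => q /=.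
by rewrite config_monom_cat eqv_scaleAl eqv_scaleAr eqv_scaleA eqv_mulA.
Qed.

Lemma config_expansion_correct t : t ~ eval_configs (config_expansion t).
Proof.
elim: t => [a|i|j k|t IHt u IHu|t IHt u IHu] /=.
- by rewrite /eval_configs /= eqv_addr0 eqv_mul1r.
- by rewrite /eval_configs /= eqv_addr0 config_monom1 /colored /= eqv_mul1l eqv_mul1r.
- by rewrite /eval_configs /= eqv_addr0 config_monom1 /colored /= eqv_mul1l eqv_mul1r.
- by rewrite eval_configs_cat -IHt -IHu.
- by rewrite -eval_configsM -IHt -IHu.
Qed.

Lemma reynoldsD t u : reynolds (t +' u) ~ reynolds t +' reynolds u.
Proof. exact: tsum_split. Qed.

Lemma reynoldsZ a t : reynolds (tC a *' t) ~ tC a *' reynolds t.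
Proof. by rewrite /reynolds tsum_distrr. Qed.

Lemma reynolds_config_monom c : reynolds (config_monom c) = symmetrize c.
Proof. by congr tsum; apply: eq_map => s; rewrite act_config_monom. Qed.

Lemma generated_reynolds t :
  (forall c, generated (symmetrize c)) -> generated (reynolds t).
Proof.
move=> gen_sym; rewrite (reynolds_eqv (config_expansion_correct t)).
elim: (config_expansion t) => [|p l IH].
  by apply: generated_tsum => s _; exact: generatedC.
rewrite [eval_configs _]/= reynoldsD reynoldsZ reynolds_config_monom.
exact/generatedD/IH/generatedZ.
Qed.

Lemma symmetrize_rcons_used c k B : k \in config_colors c ->
  exists a c', size c' = size c /\ symmetrize (rcons c (k, B)) ~ tC a *' symmetrize c'.
Proof.
case/mapP=> -[k' B1] /= p_c ->; case/splitPr: p_c => c1 c2.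
exists (ksign (word_parity B) (config_parity c2)), (c1 ++ (k', B1 ++ B) :: c2).
by split; [rewrite !size_cat | exact: symmetrize_merge].
Qed.

(* Multiplying by [power_sum B] appends [B] in each colour: in a colour
   already used by [c] it merges into a configuration of the size of [c], and
   all unused colours give the same symmetrisation. *)
Lemma generated_symmetrize :
  (forall B, generated (power_sum B)) -> forall c, generated (symmetrize c).
Proof.
move=> gen_q c; have [n] := ubnP (size c); elim: n c => // n IH.
case/lastP => [|c [k0 B]] size_c.
  by apply: generated_tsum => s _; exact: generatedC.
rewrite size_rcons ltnS in size_c.
have gen_used k : k \in config_colors c -> generated (symmetrize (rcons c (k, B))).
  case/(symmetrize_rcons_used B) => a [c' [size_c' ->]].
  by apply/generatedZ/IH; rewrite size_c'.
have [|k0_new] := boolP (k0 \in config_colors c); first exact: gen_used.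
set used := [pred k | k \in config_colors c].
set fresh := [seq k <- enum 'I_3 | predC used k].
have k0_fresh : k0 \in fresh by rewrite mem_filter mem_enum andbT.
have gen_used_sum :
    generated (tsum [seq symmetrize (rcons c (k, B)) | k <- enum 'I_3 & used k]).
  by apply: generated_tsum => k; rewrite mem_filter => /andP[k_used _]; exact: gen_used.
have := generatedM (IH c size_c) (gen_q B).
rewrite symmetrizeM_power_sum (tsumID used).
rewrite (tsum_const (l := fresh) (t := symmetrize (rcons c (k0, B)))) => [|k].
  move=> /(generatedDr gen_used_sum); apply: generatedZ_inv.
  by rewrite pnatr_eq0 -lt0n; case: fresh k0_fresh.
by rewrite mem_filter => /andP[k_new _]; exact: symmetrize_recolor.
Qed.

End Configurations.

(* [zsum a L] is [z(a+1, I)] when [L] enumerates [I] increasingly. *)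
Section PowerSums.
Variable m : nat.
Implicit Types t u v : term m.
Implicit Types L : seq 'I_m.

Definition odd_prod (k : 'I_3) L : term m := tprod [seq tO j k | j <- L].

Definition zsum (a : nat) L : term m :=
  tsum [seq tpow (tE k) a *' odd_prod k L | k <- enum 'I_3].

Lemma homog_odd_prod k L : homog (odd (size L)) (odd_prod k L).
Proof. by elim: L => [|j L IH] /=; [exact: homogC | exact: (homogM (homogO j k) IH)]. Qed.

Lemma eqv_mulCA_even p t x y : homog false t -> homog p x -> x *' (t *' y) ~ t *' (x *' y).
Proof.
move=> ht hx; rewrite eqv_mulA (homog_comm hx ht) /ksign andbF.
by rewrite eqv_mul1l eqv_mulA.
Qed.

Lemma odd_prod_insert j L : sorted <%O L -> exists c L',
  [/\ sorted <%O L', {subset L' <= j :: L} &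
      forall k, tO j k *' odd_prod k L ~ tC c *' odd_prod k L'].
Proof.
elim: L => [|i L IH] sL.
  by exists 1, [:: j]; split=> // k; rewrite eqv_mul1l.
move: (sL); rewrite /= (path_sortedE lt_trans) => /andP[all_iL sL0].
case: (ltgtP j i) => [ji|ij|->].
- exists 1, [:: j, i & L]; split=> //=; first by rewrite ji.
  by move=> k; rewrite eqv_mul1l.
- have [c [L' [sL' sub_L' eqvL']]] := IH sL0.
  exists (-1 * c), (i :: L'); split.
  + rewrite /= (path_sortedE lt_trans) sL' andbT; apply/allP => x /sub_L'.
    by rewrite inE => /predU1P[->|/(allP all_iL)].
  + move=> x; rewrite !inE => /predU1P[->|/sub_L']; first by rewrite eqxx orbT.
    by rewrite inE => /predU1P[->|->]; rewrite ?eqxx ?orbT.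
  + move=> k; rewrite /odd_prod /= -/(odd_prod k L) -/(odd_prod k L').
    by rewrite eqv_mulA eqv_Oanti eqv_scaleAl -eqv_mulA eqvL' eqv_scaleAr eqv_scaleA.
- exists 0, [::]; split=> // k.
  by rewrite /odd_prod /= eqv_mulA eqv_Osq !eqv_mul0r.
Qed.

Lemma colored_normal_form (B : seq (option 'I_m)) : exists c a L, sorted <%O L /\
  forall k, colored k B ~ tC c *' (tpow (tE k) a *' odd_prod k L).
Proof.
elim: B => [|[j|] B [c [a [L [sL eqvB]]]]].
- by exists 1, 0%N, [::]; split=> // k; rewrite /colored /odd_prod /= !eqv_mul1l.
- have [c' [L' [sL' _ eqvL']]] := odd_prod_insert j sL.
  exists (c * c'), a, L'; split=> // k.
  rewrite /colored /= -/(colored k B) eqvB eqv_scaleAr.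
  rewrite (eqv_mulCA_even _ (homog_tpow a (homogE m k)) (homogO j k)) eqvL'.
  by rewrite eqv_scaleAr eqv_scaleA.
- exists c, a.+1, L; split=> // k.
  by rewrite /colored /= -/(colored k B) eqvB eqv_scaleAr (eqv_mulA (tE k)).
Qed.

Lemma power_sum_zsum (B : seq (option 'I_m)) :
  exists c a L, sorted <%O L /\ power_sum B ~ tC c *' zsum a L.
Proof.
have [c [a [L [sL eqvB]]]] := colored_normal_form B.
by exists c, a, L; split=> //; rewrite /power_sum /zsum tsum_distrr; apply: eqv_tsum.
Qed.

Lemma sorted_enum_ord : sorted <%O (enum 'I_m).
Proof. by have := iota_ltn_sorted 0 m; rewrite -val_enum_ord sorted_map. Qed.

Lemma generated_zsum_zgen a L : sorted <%O L -> (size L <= 3)%N -> (a <= 5)%N ->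
  generated (zsum a L).
Proof.
move=> sL size_L le_a5; exists (zgen a.+1 [set j in L]); split.
  by apply: gen_z => //; rewrite cardsE (card_uniqP (lt_sorted_uniq sL)).
have enumL : [seq j <- enum 'I_m | j \in [set j in L]] = L.
  apply: lt_sorted_eq => //; first exact: lt_sorted_filter sorted_enum_ord.
  by move=> j; rewrite mem_filter inE mem_enum andbT.
by rewrite /zgen /oprod enumL /zsum tsum_ord3 /odd_prod /tprod !foldr_map.
Qed.

End PowerSums.

Definition cube_lhs (n : nat) := SMul (SConst 3%:R) (spow (SVar n) 3).

Definition cube_rhs (n : nat) :=
  SAdd (ssum3 (fun k => SMul (spow (SVar k) 3) (SConst 1)))
       (SMul (SConst (3%:R / 2%:R)) (SMul (SVar n) (ssum3 (fun k => spow (SVar k) 2)))).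

Lemma cube_check n : (n < 3)%N ->
  normal_eqb (fun _ => false) (elim_third 3) (cube_lhs n) (cube_rhs n).
Proof. by case: n => [|[|[|]]] // _; vm_compute. Qed.

Section Cube.
Variable m : nat.

Definition even_env (n : nat) : term m := tE (inord n).

Lemma even_env_comm i j :
  even_env i *' even_env j ~ tC (ksign false false) *' (even_env j *' even_env i).
Proof. exact/homog_comm/homogE/homogE. Qed.

Lemma even_env_elim n : even_env n ~ eval even_env (elim_third 3 n).
Proof.
rewrite /elim_third; case: ltnP => //= lt_n3.
by case: n lt_n3 => [|[|[|]]] //= _; apply: eqv_solve_last; exact: eqv_J1.
Qed.

(* Newton: [e_1 = e_2 = 0] in K(m), so each of [x, y, w] is a root of
   [T^3 - e_3] and [p_3 = 3 e_3]. *)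
Lemma tpow3_zsum (k : 'I_3) : tC 3%:R *' tpow (@tE m k) 3 ~ zsum 3 [::].
Proof.
rewrite -(inord_val k); have := ltn_ord k; move: (val k) => n lt_n3.
have : tC 3%:R *' tpow (@tE m (inord n)) 3 ~
       zsum 3 [::] +' tC (3%:R / 2%:R) *' (tE (inord n) *' (tpow xg 2 +' (tpow yg 2 +' tpow wg 2))).
  rewrite /zsum tsum_ord3.
  exact: (normal_eqb_sound even_env_comm even_env_elim (cube_check lt_n3)).
by rewrite eqv_J2 !eqv_mulr0 eqv_addr0.
Qed.

Lemma zsum_addn3 a (L : seq 'I_m) : zsum (3 + a) L ~ tC 3%:R^-1 *' (zsum 3 [::] *' zsum a L).
Proof.
rewrite [zsum (3 + a) L]/zsum [zsum a L]/zsum !tsum_distrr; apply: eqv_tsum => k.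
by rewrite tpowD -(tpow3_zsum k) eqv_scaleAl eqv_scaleK ?pnatr_eq0 // eqv_mulA.
Qed.

End Cube.

(* Variable [3 r + k] (for [r < 3]) is the colour-[k] generator of the [r]-th
   odd index, [9 + k] is [x_k^a] and [12 + k] the colour-[k] product of the
   remaining odd indices. *)
Definition sodd (rs : seq nat) (tail : sexpr) (k : nat) : sexpr :=
  foldr (fun r e => SMul (SVar (3 * r + k)) e) tail rs.

Definition szsum0 (rs : seq nat) := ssum3 (fun k => SMul (SConst 1) (sodd rs (SConst 1) k)).

Definition szsum (rs : seq nat) := ssum3 (fun k => SMul (SVar (9 + k)) (sodd rs (SVar (12 + k)) k)).

Definition six_lhs := SMul (SConst 6%:R) (szsum [:: 0; 1; 2]%N).

Definition six_rhs :=
  SAdd (SMul (SConst 2%:R) (SMul (szsum0 [:: 0; 1; 2]%N) (szsum [::])))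
  (SAdd (SMul (szsum0 [:: 0; 1]%N) (szsum [:: 2]%N))
  (SAdd (SMul (szsum0 [:: 1; 2]%N) (szsum [:: 0]%N))
        (SMul (SConst (-1)) (SMul (szsum0 [:: 0; 2]%N) (szsum [:: 1]%N))))).

Definition six_parity (pL : bool) (n : nat) : bool :=
  if (n < 9)%N then true else if (n < 12)%N then false else pL.

Lemma six_term_check pL : normal_eqb (six_parity pL) (elim_third 9) six_lhs six_rhs.
Proof. by case: pL; vm_compute. Qed.

Section SixTerm.
Variables (m : nat) (j1 j2 j3 : 'I_m) (a : nat) (L0 : seq 'I_m).

Definition six_env (n : nat) : term m :=
  nth (tC 0) [:: tO j1 (inord 0); tO j1 (inord 1); tO j1 (inord 2);
                 tO j2 (inord 0); tO j2 (inord 1); tO j2 (inord 2);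
                 tO j3 (inord 0); tO j3 (inord 1); tO j3 (inord 2);
                 tpow (tE (inord 0)) a; tpow (tE (inord 1)) a; tpow (tE (inord 2)) a;
                 odd_prod (inord 0) L0; odd_prod (inord 1) L0; odd_prod (inord 2) L0] n.

Lemma homog_six_env n : homog (six_parity (odd (size L0)) n) (six_env n).
Proof.
do 15 (case: n => [|n];
  first by [apply: homogO | apply/homog_tpow/homogE | apply: homog_odd_prod]).
by rewrite /six_env nth_default //; apply: homog0.
Qed.

Lemma six_env_elim n : six_env n ~ eval six_env (elim_third 9 n).
Proof.
rewrite /elim_third; case: ltnP => //= lt_n9.
case: n lt_n9 => [|[|[|[|[|[|[|[|[|n]]]]]]]]] //= _; apply: eqv_solve_last; exact: eqv_lin.
Qed.

Lemma zsum_six_term :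
  tC 6%:R *' zsum a [:: j1, j2, j3 & L0] ~
  tC 2%:R *' (zsum 0 [:: j1; j2; j3] *' zsum a L0) +'
  (zsum 0 [:: j1; j2] *' zsum a (j3 :: L0) +'
  (zsum 0 [:: j2; j3] *' zsum a (j1 :: L0) +'
   tC (-1) *' (zsum 0 [:: j1; j3] *' zsum a (j2 :: L0)))).
Proof.
rewrite /zsum !tsum_ord3.
have env_comm i j : six_env i *' six_env j ~
    tC (ksign (six_parity (odd (size L0)) i) (six_parity (odd (size L0)) j)) *'
    (six_env j *' six_env i).
  exact: homog_comm (homog_six_env i) (homog_six_env j).
exact: (normal_eqb_sound env_comm six_env_elim (six_term_check (odd (size L0)))).
Qed.

End SixTerm.

Section Reduction.
Variable m : nat.

Lemma generated_zsum_small a (L : seq 'I_m) : sorted <%O L -> (size L <= 3)%N ->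
  generated (zsum a L).
Proof.
move=> sL size_L; have [n] := ubnP a; elim: n a => // n IH a lt_an.
have [le_a5|lt5a] := leqP a 5; first exact: generated_zsum_zgen.
have le3a : (3 <= a)%N by apply: leq_trans lt5a.
rewrite -(subnKC le3a) zsum_addn3; apply/generatedZ/generatedM.
  exact: generated_zsum_zgen.
by apply: IH; lia.
Qed.

Lemma generated_zsum a (L : seq 'I_m) : sorted <%O L -> generated (zsum a L).
Proof.
have [n] := ubnP (size L); elim: n a L => // n IH a L lt_L sL.
have [|] := leqP (size L) 3; first exact: generated_zsum_small.
case: L lt_L sL => [|j1 [|j2 [|j3 L0]]] // lt_L sL L0_gt0.
have gen_sub b (s : seq 'I_m) a' : subseq s L0 ->
    (size (mask b [:: j1; j2; j3] ++ s) <= (size L0).+2)%N ->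
    generated (zsum a' (mask b [:: j1; j2; j3] ++ s)).
  move=> sub_s le_s; apply: IH; first exact: leq_ltn_trans le_s lt_L.
  exact: (subseq_sorted lt_trans (cat_subseq (mask_subseq b [:: j1; j2; j3]) sub_s) sL).
refine (generatedZ_inv (a := 6%:R) _ _); first by rewrite pnatr_eq0.
rewrite zsum_six_term.
repeat apply: generatedD; repeat apply: generatedZ; apply: generatedM.
- exact: (gen_sub [:: true; true; true] [::] _ (sub0seq L0) L0_gt0).
- exact: (gen_sub [::] L0 _ (subseq_refl L0) (leqW (leqnSn _))).
- exact: (gen_sub [:: true; true] [::] _ (sub0seq L0) (leq0n _)).
- exact: (gen_sub [:: false; false; true] L0 _ (subseq_refl L0) (leqnSn _)).
- exact: (gen_sub [:: false; true; true] [::] _ (sub0seq L0) (leq0n _)).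
- exact: (gen_sub [:: true] L0 _ (subseq_refl L0) (leqnSn _)).
- exact: (gen_sub [:: true; false; true] [::] _ (sub0seq L0) (leq0n _)).
- exact: (gen_sub [:: false; true] L0 _ (subseq_refl L0) (leqnSn _)).
Qed.

Lemma generated_power_sum (B : seq (option 'I_m)) : generated (power_sum B).
Proof.
have [c [a [L [sL ->]]]] := power_sum_zsum B.
exact/generatedZ/generated_zsum.
Qed.

End Reduction.

Theorem lemma6p1 (m : nat) (Hm : (0 < m)%N) (t : term m) :
  S3_invariant t -> exists u : term m, in_gen u /\ eqv u t.
Proof.
move=> t_inv; change (generated t); rewrite (invariant_reynolds t_inv).
exact/generatedZ/generated_reynolds/generated_symmetrize/generated_power_sum.
Qed.
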